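(* Let $m\ge 1$ and let $t_1,\dots,t_m$ be real numbers with $0<t_i\le 1$ for all $i\in\{1,\dots,m\}$. Then $$\sum_{i=1}^{m}\frac{1-t_i}{t_i}\;\ge\;\sum_{i=1}^{m}\frac{t_i(1-t_i)}{\left(\frac{1}{m}\sum_{j=1}^{m}t_j\right)^{2}}.$$ *)

From mathcomp Require Import all_boot all_order all_algebra.

From mathcomp Require Import all_boot all_order all_algebra.
From mathcomp Require Import ring.
Import Order.TTheory GRing.Theory Num.Theory.
Local Open Scope ring_scope.

(* Tangent-line trick. For fixed [a > 0] the summand gap
   [g x = (1 - x) / x - x (1 - x) / a^2] vanishes at [x = a] and lies above its
   tangent line there, [g x >= g'(a) (x - a)]. Taking [a] to be the mean of the
   [t i], the tangent terms sum to [g'(a) * 0 = 0]. *)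

Lemma tangent_le_gap (R : realFieldType) (x a : R) : 0 < x -> 0 < a ->
  (2 / a - 2 / a ^+ 2) * (x - a) <= (1 - x) / x - x * (1 - x) / a ^+ 2.
Proof.
move=> x_gt0 a_gt0; rewrite -subr_ge0.
have -> : (1 - x) / x - x * (1 - x) / a ^+ 2 - (2 / a - 2 / a ^+ 2) * (x - a)
  = (x - a) ^+ 2 / a ^+ 2 + (x - a) ^+ 2 / (x * a ^+ 2).
  by field; rewrite ?mulf_neq0 ?expf_neq0 ?gt_eqF.
by rewrite addr_ge0 // divr_ge0 ?sqr_ge0 ?mulr_ge0 ?exprn_ge0 ?ltW.
Qed.

Lemma mean_gt0 (R : numFieldType) (m : nat) (t : 'I_m -> R) :
  (0 < m)%N -> (forall i, 0 < t i) -> 0 < m%:R^-1 * \sum_(i < m) t i.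
Proof.
case: m t => // m t _ t_gt0; rewrite mulr_gt0 ?invr_gt0 ?ltr0n //.
rewrite big_ord_recl ltr_pwDl // sumr_ge0 // => i _; exact: ltW.
Qed.

Lemma sumr_sub_mean (R : numFieldType) (m : nat) (t : 'I_m -> R) :
  (0 < m)%N -> \sum_(i < m) (t i - m%:R^-1 * \sum_(j < m) t j) = 0.
Proof.
move=> m_gt0; rewrite sumrB sumr_const card_ord -mulrnAr.
by rewrite -(mulr_natl (\sum_(j < m) t j)) mulKf ?subrr // pnatr_eq0 -lt0n.
Qed.

Theorem lemma3p2 (R : realFieldType) (m : nat) (t : 'I_m -> R)
  (hm : (1 <= m)%N) (ht : forall i, 0 < t i /\ t i <= 1) :
  \sum_(i < m) (1 - t i) / t i >=
  \sum_(i < m) t i * (1 - t i) / ((m%:R)^-1 * \sum_(j < m) t j) ^+ 2.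
Proof.
have t_gt0 i : 0 < t i := (ht i).1.
set a := m%:R^-1 * _; have a_gt0 : 0 < a by exact: mean_gt0.
pose tangent i := (2 / a - 2 / a ^+ 2) * (t i - a).
have tangent_sum0 : \sum_i tangent i = 0.
  by rewrite -mulr_sumr sumr_sub_mean ?mulr0.
rewrite -subr_ge0 -sumrB -[X in X <= _]tangent_sum0 ler_sum // => i _.
exact: tangent_le_gap.
Qed.
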